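(* Let $G$ and $H$ be nontrivial finite groups. The cyclic graph $\Delta(G\times H)$ is disconnected if and only if there exists a prime $p$ such that $G$ contains an element of order $p$ whose centralizer in $G$ is a $p$-group and $H$ contains an element of order $p$ whose centralizer in $H$ is a $p$-group.
   Context: For a finite group $X$, the cyclic graph $\Delta(X)$ has vertex set $X^{\#}=X\setminus\{1\}$, and distinct vertices $x,y$ are adjacent if and only if the subgroup $\langle x,y\rangle$ is cyclic. *)

From mathcomp Require Import all_boot all_fingroup all_solvable.
Set Implicit Arguments. Unset Strict Implicit. Unset Printing Implicit Defensive.
Local Open Scope group_scope.

Definition cyclic_adj (gT : finGroupType) (X : {set gT}) : rel gT :=
  [rel x y | [&& x \in X^#, y \in X^#, x != y & cyclic <<[set x; y]>>]].

Definition cyclic_graph_connected (gT : finGroupType) (X : {set gT}) : Prop :=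
  forall x y, x \in X^# -> y \in X^# -> connect (cyclic_adj X) x y.

From mathcomp Require Import all_boot all_fingroup all_solvable.
From Stdlib Require Import Classical_Prop.
Set Implicit Arguments. Unset Strict Implicit. Unset Printing Implicit Defensive.
Local Open Scope group_scope.

(* If x in G and y in H have prime order p and p-group centralizers, then
   C((x, y)) = C_G(x) x C_H(y) is a p-group, so any cyclic subgroup <z, w> with
   (x, y) in <z> is a cyclic p-group whose unique subgroup of order p is
   <(x, y)>; hence the vertices z with (x, y) in <z> are closed under adjacency,
   and (x, 1) is not among them.
   Conversely, every vertex is joined to a power of prime order. A vertex (g, h)
   of prime order p with g, h <> 1 commutes with an element u of prime order
   q <> p of G x 1 or 1 x H, found in a centralizer that is not a p-group, and
   is then adjacent to it; prime-order vertices of G x 1 and 1 x H are adjacent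
   when their orders differ and joined through such a u otherwise. *)

Lemma in_setD1_prime_order (gT : finGroupType) (A : {set gT}) u :
  prime #[u] -> (u \in A^#) = (u \in A).
Proof. by rewrite !inE -order_eq1; case: eqP => // ->. Qed.

Lemma prime_order_elt_cycle (gT : finGroupType) (a : gT) : a != 1 ->
  exists2 b, b \in <[a]> & prime #[b].
Proof.
move=> a1; have a_gt1 : 1 < #[a] by rewrite ltn_neqAle eq_sym order_eq1 a1 order_gt0.
have [b ab ob] := Cauchy (pdiv_prime a_gt1) (pdiv_dvd #[a]).
by exists b; rewrite // ob pdiv_prime.
Qed.

Lemma not_pgroup_prime_elt (gT : finGroupType) (p : nat) (A : {group gT}) :
  ~~ p.-group A -> exists2 u, u \in A & prime #[u] /\ #[u] != p.
Proof.
rewrite /pgroup /pnat cardG_gt0 => /allPn[q]; rewrite mem_primes.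
case/and3P=> pr_q _ q_dvd q'p; have [u uA ou] := Cauchy pr_q q_dvd.
by exists u; rewrite // ou.
Qed.

Section CyclicGraph.
Variables (gT : finGroupType) (X : {group gT}).
Local Notation adj := (cyclic_adj X).

Lemma cyclic_adj_sym : symmetric adj.
Proof.
move=> x y; rewrite /cyclic_adj /= eq_sym setUC.
by case: (x \in X^#); case: (y \in X^#).
Qed.

Lemma cyclic_adj_cycle a b c : a \in X^# -> b \in X^# -> a != b ->
  a \in <[c]> -> b \in <[c]> -> adj a b.
Proof.
move=> aX bX neq_ab ac bc; rewrite /cyclic_adj /= aX bX neq_ab /=.
apply: cyclicS (cycle_cyclic c); rewrite gen_subG.
by apply/subsetP => z /set2P[] ->.
Qed.

Lemma cyclic_adj_coprime a b : a \in X^# -> b \in X^# -> commute a b ->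
  coprime #[a] #[b] -> adj a b.
Proof.
move=> aX bX cab co_ab; apply: (cyclic_adj_cycle (c := a * b)) => //.
- apply: contraTneq aX => eq_ab; move: co_ab.
  by rewrite -eq_ab /coprime gcdnn order_eq1 => /eqP ->; rewrite !inE eqxx.
- by rewrite -cycle_subG cycleMsub.
- by rewrite -cycle_subG cab cycleMsub // coprime_sym.
Qed.

Lemma connect_prime_order a : a \in X^# ->
  exists2 b, b \in X^# & prime #[b] /\ connect adj a b.
Proof.
move=> aX; have [a1 aXX] := setD1P aX.
have [b ab pr_b] := prime_order_elt_cycle a1.
have bX : b \in X^#.
  by rewrite in_setD1_prime_order // (subsetP _ _ ab) // cycle_subG.
exists b => //; split; first exact: pr_b.
have [-> | neq_ab] := eqVneq a b; first exact: connect0.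
by apply: connect1; apply: cyclic_adj_cycle neq_ab (cycle_id a) ab.
Qed.

(* With p = #[v]: <<[set z; w]>> centralizes v, so it is a cyclic p-group; its
   only subgroup of order p is <[v]>, which therefore lies in <[w]>. *)
Lemma cyclic_adj_cycle_mem v z w : prime #[v] -> #[v].-group 'C_X[v] ->
  adj z w -> v \in <[z]> -> v \in <[w]>.
Proof.
move=> pr_v pCv /and4P[zX wX _ cycC] vz; set C := <<_>> in cycC.
have zC : z \in C by rewrite mem_gen // set21.
have wC : w \in C by rewrite mem_gen // set22.
have CX : C \subset X.
  by rewrite gen_subG; apply/subsetP => u /set2P[] ->; [case/setD1P: zX | case/setD1P: wX].
have vC : v \in C by rewrite (subsetP _ _ vz) // cycle_subG.
have pC : #[v].-group C.
  apply: pgroupS pCv; rewrite subsetI CX sub_cent1.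
  by apply: subsetP vC; rewrite -abelianE cyclic_abelian.
have w1 : <[w]> != 1 by rewrite cycle_eq1; case/setD1P: wX.
have pw : #[v].-group <[w]> by apply: pgroupS pC; rewrite cycle_subG.
have [_ p_dvd _] := pgroup_pdiv pw w1.
have [u uw ou] := Cauchy pr_v p_dvd.
have uC : u \in C by rewrite (subsetP _ _ uw) // cycle_subG.
have /eqP eq_uv : <[u]> :==: <[v]>.
  by rewrite (eq_subG_cyclic cycC) ?cycle_subG // -!orderE ou.
by rewrite (subsetP _ _ (cycle_id v)) // -eq_uv cycle_subG.
Qed.

Lemma connect_cycle_mem v z : prime #[v] -> #[v].-group 'C_X[v] ->
  connect adj v z -> v \in <[z]>.
Proof.
move=> pr_v pCv; have closed_v : closed adj [pred u | v \in <[u]>].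
  move=> x y adj_xy; apply/idP/idP; apply: cyclic_adj_cycle_mem => //.
  by rewrite cyclic_adj_sym.
by move/(closed_connect closed_v); rewrite !inE cycle_id.
Qed.

End CyclicGraph.

Section DirectProduct.
Variables (gT1 gT2 : finGroupType).
Implicit Types (a : gT1) (b : gT2).

Lemma expg_pair a b n : ((a, b) : gT1 * gT2) ^+ n = (a ^+ n, b ^+ n).
Proof. by elim: n => // n IHn; rewrite !expgS IHn. Qed.

Lemma order_pair a b : #[((a, b) : gT1 * gT2)] = lcmn #[a] #[b].
Proof.
have dvd_pair n : #[((a, b) : gT1 * gT2)] %| n = (#[a] %| n) && (#[b] %| n).
  by rewrite !order_dvdn expg_pair xpair_eqE.
by apply/eqP; rewrite eqn_dvd dvd_pair dvdn_lcml dvdn_lcmr dvdn_lcm -dvd_pair dvdnn.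
Qed.

Lemma mul_pair a1 a2 b1 b2 :
  ((a1, b1) : gT1 * gT2) * (a2, b2) = (a1 * a2, b1 * b2).
Proof. by []. Qed.

Lemma commute_pair a1 a2 b1 b2 : commute a1 a2 -> commute b1 b2 ->
  commute ((a1, b1) : gT1 * gT2) (a2, b2).
Proof. by move=> ca cb; rewrite /commute !mul_pair ca cb. Qed.

Lemma pair_mul_axes a b : ((a, b) : gT1 * gT2) = (a, 1) * (1, b).
Proof. by rewrite mul_pair mulg1 mul1g. Qed.

Lemma cent1_setX (G : {group gT1}) (H : {group gT2}) a b :
  'C_(setX G H)[(a, b)] = setX 'C_G[a] 'C_H[b].
Proof.
apply/setP => -[x y]; rewrite in_setI !in_setX !in_setI !cent1E xpair_eqE /=.
by rewrite -!andbA; do !bool_congr.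
Qed.

End DirectProduct.

Section ProductCyclicGraph.
Variables (gT1 gT2 : finGroupType) (G : {group gT1}) (H : {group gT2}).
Local Notation X := (setX_group G H).
Local Notation adj := (cyclic_adj (setX G H)).

Lemma setX_disconnected p x y : prime p ->
    x \in G -> #[x] = p -> p.-group 'C_G[x] ->
    y \in H -> #[y] = p -> p.-group 'C_H[y] ->
  ~ cyclic_graph_connected (setX G H).
Proof.
move=> pr_p xG ox pCx yH oy pCy connGH.
have oxy : #[((x, y) : gT1 * gT2)] = p by rewrite order_pair ox oy; apply/lcmn_idPl.
have ox1 : #[((x, 1) : gT1 * gT2)] = p by rewrite order_pair order1 lcmn1.
have xyX : ((x, y) : gT1 * gT2) \in X^#.
  by rewrite in_setD1_prime_order ?oxy // in_setX xG yH.
have x1X : ((x, 1) : gT1 * gT2) \in X^#.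
  by rewrite in_setD1_prime_order ?ox1 // in_setX xG group1.
have pr_xy : prime #[((x, y) : gT1 * gT2)] by rewrite oxy.
have pCxy : #[(x, y)].-group 'C_X[(x, y)].
  by rewrite oxy cent1_setX /pgroup cardsX pnatM; apply/andP.
have /cycleP[k] := connect_cycle_mem pr_xy pCxy (connGH _ _ xyX x1X).
by rewrite expg_pair expg1n => -[_ y1]; move: pr_p; rewrite -oy y1 order1.
Qed.

Section Connected.

Hypothesis centralizers_not_pgroup : forall p g h, prime p ->
  g \in G -> #[g] = p -> h \in H -> #[h] = p ->
  ~~ p.-group 'C_G[g] || ~~ p.-group 'C_H[h].

Local Notation axes := (setX G 1 :|: setX 1 H).

Lemma axes_prime_vertex u : u \in axes -> prime #[u] -> u \in X^#.
Proof.
move=> uA pr_u; rewrite in_setD1_prime_order //; apply: subsetP uA.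
by rewrite subUset !setXS ?sub1G.
Qed.

Lemma axial_commuting_prime_elt p g h : prime p ->
    g \in G -> #[g] = p -> h \in H -> #[h] = p ->
  exists2 u, u \in axes &
    [/\ prime #[u], coprime #[u] p, commute u (g, 1) & commute u (1, h)].
Proof.
move=> pr_p gG og hH oh; have co_p q : prime q -> q != p -> coprime q p.
  by move=> pr_q; rewrite prime_coprime // dvdn_prime2.
case/orP: (centralizers_not_pgroup pr_p gG og hH oh).
  case/not_pgroup_prime_elt=> u /setIP[uG /cent1P cug] [pr_u u'p].
  exists (u, 1); first by rewrite in_setU in_setX uG group1.
  rewrite order_pair order1 lcmn1; split; rewrite ?co_p //.
    exact: commute_pair cug (commute1 1).
  exact: commute_pair (commute1 u) (commute_sym (commute1 h)).
case/not_pgroup_prime_elt=> u /setIP[uH /cent1P cuh] [pr_u u'p].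
exists (1, u); first by rewrite in_setU !in_setX uH !group1 orbT.
rewrite order_pair order1 lcm1n; split; rewrite ?co_p //.
  exact: commute_pair (commute_sym (commute1 g)) (commute1 u).
exact: commute_pair (commute1 1) cuh.
Qed.

Lemma connect_axes z w : z \in setX G 1 -> w \in setX 1 H ->
  prime #[z] -> prime #[w] -> connect adj z w.
Proof.
move=> zA wA pr_z pr_w.
have zX : z \in X^# by rewrite axes_prime_vertex // in_setU zA.
have wX : w \in X^# by rewrite axes_prime_vertex // in_setU wA orbT.
case: z zA pr_z zX => g _ /setXP[gG /set1P ->].
case: w wA pr_w wX => _ h /setXP[/set1P -> hH].
rewrite !order_pair !order1 lcmn1 lcm1n => pr_h hX pr_g gX.
have [eq_gh | neq_gh] := eqVneq #[g] #[h].
  have [u uA [pr_u co_u cug cuh]] := axial_commuting_prime_elt pr_g gG erefl hH (esym eq_gh).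
  have uX := axes_prime_vertex uA pr_u.
  apply: (@connect_trans _ _ u); apply: connect1.
    by rewrite cyclic_adj_sym cyclic_adj_coprime // order_pair order1 lcmn1.
  by rewrite cyclic_adj_coprime // order_pair order1 lcm1n -eq_gh.
apply: connect1; rewrite cyclic_adj_coprime //.
  exact: commute_pair (commute1 g) (commute_sym (commute1 h)).
by rewrite !order_pair !order1 lcmn1 lcm1n prime_coprime // dvdn_prime2.
Qed.

Lemma connect_prime_axes z : z \in X^# -> prime #[z] ->
  exists2 u, u \in axes & prime #[u] /\ connect adj z u.
Proof.
case: z => g h zX pr_z; have /setD1P[_ /setXP[gG hH]] := zX.
have [g1 | g1] := eqVneq g 1.
  exists (g, h); last by split; last exact: connect0.
  by rewrite in_setU !in_setX g1 !group1 hH orbT.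
have [h1 | h1] := eqVneq h 1.
  exists (g, h); last by split; last exact: connect0.
  by rewrite in_setU !in_setX h1 !group1 gG.
have [og oh] : #[g] = #[(g, h)] /\ #[h] = #[(g, h)].
  by split; apply/prime_nt_dvdP; rewrite ?order_eq1 // order_pair ?dvdn_lcml ?dvdn_lcmr.
have [u uA [pr_u co_u cug cuh]] := axial_commuting_prime_elt pr_z gG og hH oh.
have uX := axes_prime_vertex uA pr_u.
have czu : commute (g, h) u by rewrite pair_mul_axes; apply/commute_sym/commuteM.
exists u => //; split; first exact: pr_u.
by apply: connect1; apply: cyclic_adj_coprime zX uX czu _; rewrite coprime_sym.
Qed.

Lemma setX_connected : G :!=: 1 -> H :!=: 1 -> cyclic_graph_connected (setX G H).
Proof.
move=> /trivgPn[g gG g1] /trivgPn[h hH h1].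
have [g0 g0g pr_g0] := prime_order_elt_cycle g1.
have [h0 h0h pr_h0] := prime_order_elt_cycle h1.
have g0A : ((g0, 1) : gT1 * gT2) \in setX G 1.
  by rewrite in_setX group1 (subsetP _ _ g0g) ?cycle_subG.
have h0A : ((1, h0) : gT1 * gT2) \in setX 1 H.
  by rewrite in_setX group1 (subsetP _ _ h0h) ?cycle_subG.
have pr_g0A : prime #[((g0, 1) : gT1 * gT2)] by rewrite order_pair order1 lcmn1.
have pr_h0A : prime #[((1, h0) : gT1 * gT2)] by rewrite order_pair order1 lcm1n.
have connect_sym_adj := sym_connect_sym (@cyclic_adj_sym _ X).
have axes_to_hub u : u \in axes -> prime #[u] -> connect adj u (g0, 1).
  case/setUP=> uA pr_u; last by rewrite connect_sym_adj connect_axes.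
  apply: connect_trans (connect_axes uA h0A pr_u pr_h0A) _.
  by rewrite connect_sym_adj connect_axes.
have to_hub z : z \in X^# -> connect adj z (g0, 1).
  move=> zX; have [y yX [pr_y zy]] := connect_prime_order zX.
  have [u uA [pr_u yu]] := connect_prime_axes yX pr_y.
  exact: connect_trans zy (connect_trans yu (axes_to_hub u uA pr_u)).
move=> x y xX yX; apply: connect_trans (to_hub x xX) _.
by rewrite connect_sym_adj to_hub.
Qed.

End Connected.

End ProductCyclicGraph.

Theorem corollary4p6 (gT1 gT2 : finGroupType) (G : {group gT1}) (H : {group gT2})
  (ntG : G :!=: 1) (ntH : H :!=: 1) :
  ~ cyclic_graph_connected (setX G H) <->
  exists p : nat, [/\ prime p,
     (exists2 x, x \in G & (#[x] = p /\ p.-group 'C_G[x])) &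
     (exists2 y, y \in H & (#[y] = p /\ p.-group 'C_H[y]))].
Proof.
split=> [disconnected | [p [pr_p [x xG [ox pCx]] [y yH [oy pCy]]]]]; last first.
  exact: setX_disconnected pr_p xG ox pCx yH oy pCy.
apply: NNPP => no_p; apply/disconnected/setX_connected => // p x y pr_p xG ox yH oy.
rewrite -negb_and; apply/negP => /andP[pCx pCy].
by apply: no_p; exists p; split => //; [exists x | exists y].
Qed.
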